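(* Let $\Omega := \{0,1\}^{\mathbb{Z}}$ and let $\tau:\Omega\to\Omega$ be the shift defined by $(\tau\omega)(x) := \omega(x-1)$ for $\omega\in\Omega$, $x\in\mathbb{Z}$; for $A\subseteq\Omega$ write $\tau A := \{\tau\omega : \omega\in A\}$. Let $\mathcal{F}$ be a $\sigma$-algebra on $\Omega$ that contains all singletons and is closed under the shift (that is, $A\in\mathcal{F}$ implies $\tau A\in\mathcal{F}$). If there exists a measure $\mu$ on $\mathcal{F}$ that is shift-invariant (that is, $\mu=\mu\circ\tau$), satisfies $\mu(\Omega)\in(0,\infty)$, and satisfies $\mu(\{\omega\})=0$ for all $\omega\in\Omega$, then $\mathcal{F}$ does not contain all subsets of $\Omega$.
   Context: The axiom of choice (in the form of the well-ordering principle) is assumed. *)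

From HB Require Import structures.
From mathcomp Require Import all_boot all_order all_algebra.
From mathcomp Require Import all_classical all_reals.
From mathcomp Require Import ereal topology normedtype sequences measure.
Set Implicit Arguments. Unset Strict Implicit. Unset Printing Implicit Defensive.
Import Order.TTheory GRing.Theory Num.Theory.
Local Open Scope classical_set_scope.
Local Open Scope ring_scope.

Definition Omega := int -> bool.

Definition tau (w : Omega) : Omega := fun x => w (x - 1).

(* mu is a (nonnegative, extended-real valued, countably additive) measure
   on the sigma-algebra F (values outside F are irrelevant). *)
Definition is_measure_on (R : realType) (F : set (set Omega))
    (mu : set Omega -> \bar R) : Prop :=
  [/\ mu set0 = 0%E,
      (forall A, F A -> (0 <= mu A)%E) &
      (forall A : (set Omega)^nat, (forall n, F (A n)) -> trivIset setT A ->
        (fun n => \sum_(0 <= i < n) mu (A i))%E @ \oo --> mu (\bigcup_n A n))].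

From HB Require Import structures.
From mathcomp Require Import all_boot all_order all_algebra.
From mathcomp Require Import all_classical all_reals.
From mathcomp Require Import ereal topology normedtype sequences measure.
Set Implicit Arguments. Unset Strict Implicit. Unset Printing Implicit Defensive.
Import Order.TTheory GRing.Theory Num.Theory.
Local Open Scope classical_set_scope.
Local Open Scope ring_scope.

(** Periodic sequences are countable, hence null.  Choosing one point in
    every shift orbit of an aperiodic sequence gives a Vitali set V whose
    integer translates are pairwise disjoint and cover the aperiodic
    sequences.  If every subset were measurable, shift invariance would make
    mu(Omega) a countable sum of copies of mu(V): either 0 or infinite. *)

Definition shiftz (n : int) (w : Omega) : Omega := fun x => w (x - n).

Lemma shiftzD m n w : shiftz m (shiftz n w) = shiftz (m + n) w.
Proof. by apply: funext => x; rewrite /shiftz opprD addrA (addrAC x). Qed.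

Lemma shiftz0 w : shiftz 0 w = w.
Proof. by apply: funext => x; rewrite /shiftz subr0. Qed.

Lemma shiftzK n : cancel (shiftz n) (shiftz (- n)).
Proof. by move=> w; rewrite shiftzD addNr shiftz0. Qed.

Lemma shiftzNK n : cancel (shiftz (- n)) (shiftz n).
Proof. by move=> w; rewrite shiftzD addrN shiftz0. Qed.

Lemma tauE : tau = shiftz 1.
Proof. by []. Qed.

Lemma shiftz_fixN n w : shiftz n w = w -> shiftz (- n) w = w.
Proof. by move=> fix_w; rewrite -{1}fix_w shiftzK. Qed.

Lemma shiftz_fixM n w : shiftz n w = w -> forall q : int, shiftz (q * n) w = w.
Proof.
move=> fix_w; suff fix_nat (k : nat) : shiftz (k%:Z * n) w = w.
  by case=> k //; rewrite NegzE mulNr shiftz_fixN.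
elim: k => [|k IHk]; first by rewrite mul0r shiftz0.
by rewrite -addn1 PoszD mulrDl mul1r -shiftzD fix_w IHk.
Qed.

Definition periodic (w : Omega) := exists2 n : int, n != 0 & shiftz n w = w.

Lemma periodic_shiftz n w : periodic (shiftz n w) -> periodic w.
Proof.
case=> p p_neq0 fix_w; exists p => //.
by rewrite -(shiftzK n w) shiftzD addrC -shiftzD fix_w shiftzK.
Qed.

Definition periodic_ext (s : seq bool) : Omega :=
  fun x => nth false s `|(x %% (size s)%:Z)%Z|%N.

Lemma periodic_extP w : periodic w -> exists s, w = periodic_ext s.
Proof.
case=> n n_neq0 fix_w.
have {}fix_w : shiftz `|n|%N w = w.
  case: (lerP 0 n) => n_sgn; first by rewrite gez0_abs.
  by rewrite ltz0_abs // shiftz_fixN.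
set p := `|n|%N in fix_w; have p_gt0 : (0 < p)%N by rewrite absz_gt0.
exists (mkseq (fun i => w i%:Z) p); apply: funext => x.
have p_neq0 : p%:Z != 0 by rewrite eqz_nat -lt0n.
have x_mod_ge0 := modz_ge0 x p_neq0.
have x_mod_lt : ((x %% p%:Z)%Z < p%:Z) by rewrite ltz_pmod // ltz_nat.
rewrite /periodic_ext size_mkseq nth_mkseq -?ltz_nat gez0_abs //.
have -> : (x %% p%:Z)%Z = x - (x %/ p%:Z)%Z * p%:Z.
  by rewrite {2}(divz_eq x p) addrAC subrr add0r.
by rewrite -[in LHS](shiftz_fixM fix_w (x %/ p%:Z)%Z).
Qed.

Definition periodic_enum (n : nat) : Omega :=
  periodic_ext (odflt [::] (unpickle n)).

Lemma periodic_sub_range : [set w | periodic w] `<=` range periodic_enum.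
Proof.
move=> w /periodic_extP[s ->]; exists (pickle s) => //.
by rewrite /periodic_enum pickleK.
Qed.

Definition int_of_nat (k : nat) : int := if odd k then Negz k./2 else Posz k./2.

Lemma int_of_nat_inj : injective int_of_nat.
Proof.
move=> i j eq_ij; rewrite -(odd_double_half i) -(odd_double_half j).
by move: eq_ij; rewrite /int_of_nat; case: (odd i) (odd j) => [] [] // [->].
Qed.

Lemma int_of_nat_surj (n : int) : exists k, int_of_nat k = n.
Proof.
case: n => m; first by exists m.*2; rewrite /int_of_nat odd_double doubleK.
by exists m.*2.+1; rewrite /int_of_nat /= odd_double /= uphalf_double.
Qed.

Lemma enatmul_bounded_eq0 (R : realType) (x y : \bar R) :
  (0 <= x)%E -> (y < +oo)%E -> (forall n, x *+ n <= y)%E -> x = 0%E.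
Proof.
case: x => [r| |] // r_ge0 y_fin le_y; last first.
  by have := le_y 1%N; rewrite leNgt y_fin.
have := le_y 0%N; case: y y_fin le_y => [c| |] // _ le_c _.
move: r_ge0; rewrite lee_fin le_eqVlt => /predU1P[<-//|r_gt0].
have c_ge0 : 0 <= c / r.
  by apply: divr_ge0; [rewrite -lee_fin (le_trans _ (le_c 0%N)) | exact: ltW].
have := archi_boundP c_ge0; rewrite ltr_pdivrMr // mulr_natl ltNge.
by have := le_c (Num.Def.archi_bound (c / r)); rewrite -EFin_natmul lee_fin => ->.
Qed.

Section CountablyAdditive.
Variables (R : realType) (F : set (set Omega)) (mu : set Omega -> \bar R).
Hypothesis mu_measure : is_measure_on F mu.

Lemma measure_bigcup_sup (A : (set Omega)^nat) :
  (forall n, F (A n)) -> trivIset setT A ->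
  mu (\bigcup_n A n) = ereal_sup (range (fun n => \sum_(0 <= i < n) mu (A i))%E).
Proof.
case: mu_measure => _ mu_ge0 mu_sigma FA disjA.
have le_sums : {homo (fun n => \sum_(0 <= i < n) mu (A i))%E :
                    n m / (n <= m)%N >-> (n <= m)%E}.
  by apply: lee_sum_nneg_natr => n _ _; exact: mu_ge0.
have sums_cvg := ereal_nondecreasing_cvgn le_sums.
apply: (cvg_unique (@ereal_hausdorff R)) (mu_sigma A FA disjA) sums_cvg.
Qed.

Lemma measure_countable_null (e : nat -> Omega) (C : set Omega) :
  F set0 -> (forall w, F [set w]) -> (forall w, mu [set w] = 0%E) ->
  C `<=` range e -> mu C = 0%E.
Proof.
move=> F0 F1 mu1 sub_Ce; case: (mu_measure) => mu0 _ _.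
pose B n := if `[< C (e n) /\ forall k, (k < n)%N -> e k <> e n >]
            then [set e n] else set0.
have FB n : F (B n) by rewrite /B; case: ifP.
have muB n : mu (B n) = 0%E by rewrite /B; case: ifP.
have disjB : trivIset setT B.
  move=> i j _ _ [w []]; rewrite /B.
  case: ifP => // /asboolP[_ min_i] ->; case: ifP => // /asboolP[_ min_j] eq_ij.
  by case: (ltngtP i j) => // [/min_j | /min_i]; rewrite eq_ij => /(_ erefl).
have coverB : \bigcup_n B n = C.
  apply/seteqP; split=> [w [n _]|w Cw].
    by rewrite /B; case: ifP => // /asboolP[? _] ->.
  have [n0 _ en0] := sub_Ce w Cw.
  have ex_n : exists n, `[< e n = w >] by exists n0; apply/asboolP.
  have [n /asboolP en min_n] := ex_minnP ex_n.
  exists n => //; rewrite /B ifT -?en //; apply/asboolP; split; first by rewrite en.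
  by move=> k lt_kn ek; have := min_n k (asboolT (etrans ek en)); rewrite leqNgt lt_kn.
rewrite -coverB measure_bigcup_sup //; apply/le_anti/andP; split.
  by apply: ge_ereal_sup => _ [n _ <-]; rewrite big1.
by apply: ereal_sup_ubound; exists 0%N => //; rewrite big_geq.
Qed.

End CountablyAdditive.

(* The default point of [xget] must not depend on [w]: this is what makes
   [orbit_rep] constant along orbits. *)
Definition orbit_rep (w : Omega) : Omega :=
  xget (fun _ => false) (range (shiftz ^~ w)).

Lemma orbit_repP w : exists n, orbit_rep w = shiftz n w.
Proof.
have [n _ <-] : range (shiftz ^~ w) (orbit_rep w).
  by apply: xgetPex; exists w, 0 => //; rewrite shiftz0.
by exists n.
Qed.

Lemma orbit_rep_shiftz n w : orbit_rep (shiftz n w) = orbit_rep w.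
Proof.
rewrite /orbit_rep; congr xget; apply/seteqP; split=> _ [m _ <-].
  by exists (m + n) => //; rewrite shiftzD.
by exists (m - n) => //; rewrite shiftzD subrK.
Qed.

Definition vitali_set : set Omega := [set v | ~ periodic v /\ orbit_rep v = v].

Lemma vitali_shiftz_inj m n v v' : vitali_set v -> vitali_set v' ->
  shiftz m v = shiftz n v' -> m = n /\ v = v'.
Proof.
move=> [aper_v rep_v] [_ rep_v'] /(congr1 (shiftz (- n))).
rewrite shiftzK shiftzD => def_v'.
have eq_v'v : v' = v by rewrite -rep_v' -def_v' orbit_rep_shiftz rep_v.
split; last exact: esym eq_v'v.
apply/eqP; rewrite -subr_eq0 addrC; apply: contra_notT aper_v => nz.
by exists (- n + m); rewrite // def_v' eq_v'v.
Qed.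

Lemma vitali_cover w : ~ periodic w ->
  exists n, exists2 v, vitali_set v & w = shiftz n v.
Proof.
move=> aper_w; have [k rep_w] := orbit_repP w.
exists (- k), (orbit_rep w); last by rewrite rep_w shiftzK.
split; last by rewrite {1}rep_w orbit_rep_shiftz.
by rewrite rep_w => /periodic_shiftz.
Qed.

Definition vitali_partition (k : nat) : set Omega :=
  if k is k'.+1 then shiftz (int_of_nat k') @` vitali_set
  else [set w | periodic w].

Lemma vitali_partition_disj : trivIset setT vitali_partition.
Proof.
have aper_shiftz n w : vitali_set w -> ~ periodic (shiftz n w).
  by move=> [aper_w _] /periodic_shiftz.
move=> [|i] [|j] _ _ [w []] //=.
- move=> per_w [v Vv def_w].
  by case: (aper_shiftz (int_of_nat j) v Vv); rewrite def_w.
- move=> [v Vv def_w] per_w.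
  by case: (aper_shiftz (int_of_nat i) v Vv); rewrite def_w.
by move=> [v Vv <-] [v' Vv' /(vitali_shiftz_inj Vv' Vv)[/int_of_nat_inj ->]].
Qed.

Lemma vitali_partition_cover : \bigcup_k vitali_partition k = setT.
Proof.
apply/seteqP; split=> // w _; have [per_w|aper_w] := pselect (periodic w).
  by exists 0%N.
have [n [v Vv ->]] := vitali_cover aper_w; have [k <-] := int_of_nat_surj n.
by exists k.+1 => //; exists v.
Qed.

Section ShiftInvariantMeasure.
Variables (R : realType) (F : set (set Omega)) (mu : set Omega -> \bar R).
Hypotheses (mu_measure : is_measure_on F mu) (F_all : forall A, F A).
Hypotheses (mu_tau : forall A, F A -> mu (tau @` A) = mu A)
           (mu_set1 : forall w, mu [set w] = 0%E).

Lemma mu_shiftz n A : mu (shiftz n @` A) = mu A.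
Proof.
suff mu_shift_nat (k : nat) B : mu (shiftz k @` B) = mu B.
  case: n => [k|k]; first exact: mu_shift_nat.
  rewrite NegzE -(mu_shift_nat k.+1 (shiftz (- k.+1%:Z) @` A)) image_comp.
  by congr mu; rewrite -[RHS]image_id; apply: eq_imagel => w _ /=; rewrite shiftzNK.
elim: k B => [|k IHk] B.
  by congr mu; rewrite -[RHS]image_id; apply: eq_imagel => w _; rewrite shiftz0.
have -> : shiftz k.+1 @` B = tau @` (shiftz k @` B).
  by rewrite image_comp; apply: eq_imagel => w _; rewrite /= tauE shiftzD -intS.
by rewrite mu_tau ?IHk.
Qed.

Lemma mu_periodic : mu [set w | periodic w] = 0%E.
Proof.
apply: (measure_countable_null mu_measure (F_all set0) (fun w => F_all [set w])).
  exact: mu_set1.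
exact: periodic_sub_range.
Qed.

(* Block 0 of [vitali_partition] is the null set of periodic points,
   whence the shift [n.-1]. *)
Lemma mu_setT_vitali :
  mu setT = ereal_sup (range (fun n => mu vitali_set *+ n.-1))%E.
Proof.
rewrite -[in LHS]vitali_partition_cover.
rewrite (measure_bigcup_sup mu_measure (fun _ => F_all _) vitali_partition_disj).
congr ereal_sup; apply: eq_imagel => -[|n] _ /=; first by rewrite big_geq.
elim: n => [|n IHn]; first by rewrite big_nat1 mu_periodic.
by rewrite big_nat_recr // IHn mu_shiftz muleS addeC.
Qed.

Lemma mu_setT_eq0 : (mu setT < +oo)%E -> mu setT = 0%E.
Proof.
case: mu_measure => _ mu_ge0 _ mu_fin.
have mu_vitali0 : mu vitali_set = 0%E.
  apply: enatmul_bounded_eq0 (mu_ge0 _ (F_all _)) mu_fin _ => n.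
  by rewrite mu_setT_vitali; apply: ereal_sup_ubound; exists n.+1.
rewrite mu_setT_vitali mu_vitali0; apply/le_anti/andP; split.
  by apply: ge_ereal_sup => _ [n _ <-]; rewrite -mule_natl mule0.
by apply: ereal_sup_ubound; exists 0%N.
Qed.

End ShiftInvariantMeasure.

Theorem theorem1 (R : realType) (F : set (set Omega)) :
  sigma_algebra setT F ->
  (forall w : Omega, F [set w]) ->
  (forall A, F A -> F (tau @` A)) ->
  (exists mu : set Omega -> \bar R,
     [/\ is_measure_on F mu,
         (forall A, F A -> mu (tau @` A) = mu A),
         (0 < mu setT)%E, (mu setT < +oo)%E &
         (forall w : Omega, mu [set w] = 0%E)]) ->
  ~ (forall A : set Omega, F A).
Proof.
(* The closure properties of F are implied by F being the full power set. *)
move=> _ _ _ [mu [mu_measure mu_tau mu_gt0 mu_fin mu_set1]] F_all.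
by move: mu_gt0; rewrite (mu_setT_eq0 mu_measure F_all mu_tau mu_set1 mu_fin) ltxx.
Qed.
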